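(* Let $x\in X$, $n\in \mathbb{Z}^k$ and $a\in \mathbb{R}^k$. (1) If $\phi(T^nx)>0$, then $B_{M/2}(n,1/\phi(T^nx))\subset V(x,n)$, where $B_{M/2}(\cdot)$ denotes the closed Euclidean ball of radius $M/2$ in $\mathbb{R}^{k+1}$. (2) If $W(x,n)$ is non-empty, then $1\leq 1/\phi(T^nx)\leq 2$. (3) If $(a,-H)\in V(x,n)$, i.e. $a\in W(x,n)$, then $|a-n|<L+\sqrt{k}$. (4) Let $s>1$ and $r>0$. One can choose $M$ sufficiently large depending on $s,r$ (and then choose the integer $L\geq M$, the function $\phi$ and the number $H\geq (L+\sqrt{k})^2$ for this $M$ as in the setting described in the context) so that, for all $x\in X$, $n\in\mathbb{Z}^k$, $a\in\mathbb{R}^k$: if $(a,-sH)\in V(x,n)$ then $B_r(a/s+(1-1/s)n)\subset W(x,n)$.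
   Context: Let $(X,\mathbb{Z}^k,T)$ be a dynamical system ($X$ a compact metric space with a continuous $\mathbb{Z}^k$-action) having the marker property: for every finite $F\subset\mathbb{Z}^k$ there is an open $U\subset X$ with $X=\bigcup_{n\in\mathbb{Z}^k}T^nU$ and $U\cap T^nU=\emptyset$ for all nonzero $n\in F$. Let $M$ be a positive integer. Fix an integer $L\geq M$ and a continuous function $\phi:X\to[0,1]$ such that: (i) if $\phi(x)>0$ then $\phi(T^nx)=0$ for all nonzero $n\in\mathbb{Z}^k$ with $|n|<M$; (ii) for every $x\in X$ there is $n\in\mathbb{Z}^k$ with $|n|<L$ and $\phi(T^nx)=1$ (such $L,\phi$ exist by the marker property). For $x\in X$ and $n\in\mathbb{Z}^k$ with $\phi(T^nx)\neq 0$, let $V(x,n)\subset\mathbb{R}^{k+1}$ be the Voronoi cell of the center $(n,1/\phi(T^nx))$ with respect to the set of centers $\{(m,1/\phi(T^mx)) : m\in\mathbb{Z}^k,\ \phi(T^mx)\neq0\}$, i.e. the set of $u\in\mathbb{R}^{k+1}$ with $|u-(n,1/\phi(T^nx))|\leq|u-(m,1/\phi(T^mx))|$ for all such $m$ ($|\cdot|$ the Euclidean norm); if $\phi(T^nx)=0$ set $V(x,n)=\emptyset$. Choose a real number $H\geq(L+\sqrt{k})^2$ and let $W(x,n)$ be the projection to the first $k$ coordinates of $V(x,n)\cap(\mathbb{R}^k\times\{-H\})$. Then $\mathbb{R}^k=\bigcup_{n\in\mathbb{Z}^k}W(x,n)$. $B_r(\cdot)$ denotes the closed Euclidean ball of radius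 $r$. *)

From HB Require Import structures.
From mathcomp Require Import all_boot all_order all_algebra.
From mathcomp Require Import all_classical all_reals all_analysis.
Set Implicit Arguments. Unset Strict Implicit. Unset Printing Implicit Defensive.
Import Order.TTheory GRing.Theory Num.Theory.
Import numFieldTopology.Exports numFieldNormedType.Exports.
Local Open Scope classical_set_scope.
Local Open Scope ring_scope.

(* Z^k is 'rV[int]_k, R^k is 'rV[R]_k, R^(k+1) is 'rV[R]_k * R. *)

Definition zvecR {R : realType} {k : nat} (n : 'rV[int]_k) : 'rV[R]_k :=
  map_mx (fun z : int => z%:~R) n.

Definition enorm {R : realType} {k : nat} (v : 'rV[R]_k) : R :=
  Num.sqrt (\sum_(i < k) v ord0 i ^+ 2).

Definition enorm1 {R : realType} {k : nat} (u : 'rV[R]_k * R) : R :=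
  Num.sqrt (\sum_(i < k) u.1 ord0 i ^+ 2 + u.2 ^+ 2).

Definition esub1 {R : realType} {k : nat} (u v : 'rV[R]_k * R) : 'rV[R]_k * R :=
  (u.1 - v.1, u.2 - v.2).

Definition cball {R : realType} {k : nat} (c : 'rV[R]_k) (r : R) : set 'rV[R]_k :=
  [set b | enorm (b - c) <= r].
Definition cball1 {R : realType} {k : nat} (c : 'rV[R]_k * R) (r : R)
  : set ('rV[R]_k * R) := [set u | enorm1 (esub1 u c) <= r].

Definition is_Zk_action {R : realType} {k : nat} {X : metricType R}
  (T : 'rV[int]_k -> X -> X) : Prop :=
  (forall x, T 0 x = x) /\
  (forall m n x, T (m + n) x = T m (T n x)) /\
  (forall n, continuous (T n)).

Definition marker_property {k : nat} {X : topologicalType}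
  (T : 'rV[int]_k -> X -> X) : Prop :=
  forall F : set 'rV[int]_k, finite_set F ->
    exists U : set X, open U /\
      (forall x : X, exists n, (T n @` U) x) /\
      (forall n, F n -> n != 0 -> U `&` (T n @` U) = set0).

Definition admissible {R : realType} {k : nat} {X : metricType R}
  (T : 'rV[int]_k -> X -> X) (M L : nat) (phi : X -> R) (H : R) : Prop :=
  (0 < M)%N /\ (M <= L)%N /\
  continuous phi /\ (forall x, 0 <= phi x <= 1) /\
  (forall x, 0 < phi x -> forall n : 'rV[int]_k, n != 0 ->
      enorm (zvecR n : 'rV[R]_k) < M%:R -> phi (T n x) = 0) /\
  (forall x, exists n : 'rV[int]_k,
      enorm (zvecR n : 'rV[R]_k) < L%:R /\ phi (T n x) = 1) /\
  (L%:R + Num.sqrt (k%:R : R)) ^+ 2 <= H.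

Definition vcenter {R : realType} {k : nat} {X : Type}
  (T : 'rV[int]_k -> X -> X) (phi : X -> R) (x : X) (n : 'rV[int]_k)
  : 'rV[R]_k * R := (zvecR n, (phi (T n x))^-1).

(* Voronoi cell V(x,n); empty when phi(T^n x) = 0 *)
Definition Vcell {R : realType} {k : nat} {X : Type}
  (T : 'rV[int]_k -> X -> X) (phi : X -> R) (x : X) (n : 'rV[int]_k)
  : set ('rV[R]_k * R) :=
  [set u | phi (T n x) != 0 /\
     forall m : 'rV[int]_k, phi (T m x) != 0 ->
       enorm1 (esub1 u (vcenter T phi x n)) <= enorm1 (esub1 u (vcenter T phi x m))].

Definition Wcell {R : realType} {k : nat} {X : Type}
  (T : 'rV[int]_k -> X -> X) (phi : X -> R) (H : R) (x : X) (n : 'rV[int]_k)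
  : set 'rV[R]_k := [set a | Vcell T phi x n (a, - H)].

(* All four parts are elementary Euclidean geometry of the centres
   c_m = (m, 1/phi(T^m x)) in R^k x R.  Part (1): distinct active centres are at
   least M apart, so a point within M/2 of c_n is no farther from c_n than from
   any other centre.  Parts (2) and (3): rounding a down to a lattice point and
   then moving to a nearby marker gives a centre c_m at height 1 with
   |a - m| < L + sqrt k; since H >= (L + sqrt k)^2, comparing the distances
   from (a, -H) to c_n and to c_m forces 1/phi(T^n x) <= 2 and |a - n| <= |a - m|.
   Part (4): squared distances to two centres differ by an affine function, so
   Voronoi cells are convex, and (b, -H) is the convex combination
   (1/s) (a, -sH) + (1 - 1/s) z with z = (n + (b - p)/(1 - 1/s), 0), where p is
   the centre of the ball; z lies within (r + 2)/(1 - 1/s) <= M/2 of c_n, hence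
   in V(x, n) by part (1). *)

From HB Require Import structures.
From mathcomp Require Import all_boot all_order all_algebra.
From mathcomp Require Import all_classical all_reals all_analysis.
From mathcomp Require Import ring lra.
Import Order.TTheory GRing.Theory Num.Theory.
Import numFieldTopology.Exports numFieldNormedType.Exports.
Set Implicit Arguments. Unset Strict Implicit. Unset Printing Implicit Defensive.
Local Open Scope classical_set_scope.
Local Open Scope ring_scope.

Lemma quadratic_ge0_discr (R : realFieldType) (A B D : R) : 0 <= B ->
  (forall t, 0 <= A - 2 * t * D + t ^+ 2 * B) -> D ^+ 2 <= A * B.
Proof.
move=> B_ge0 q_ge0; have [B_gt0|B_le0] := ltrP 0 B.
  have := q_ge0 (D / B).
  have -> : A - 2 * (D / B) * D + (D / B) ^+ 2 * B = (A * B - D ^+ 2) / B.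
    by field; rewrite gt_eqF.
  by rewrite pmulr_lge0 ?invr_gt0 // subr_ge0.
have B0 : B = 0 by apply/eqP; rewrite eq_le B_le0 B_ge0.
rewrite B0 mulr0 in q_ge0 *.
have [-> | D_neq0] := eqVneq D 0; first by rewrite expr0n.
have := q_ge0 ((A + 1) / (2 * D)); rewrite mulr0 addr0.
have -> : 2 * ((A + 1) / (2 * D)) * D = A + 1 by field.
lra.
Qed.

Lemma sqr_height_bound (R : realFieldType) (P Q H t : R) :
  0 <= P -> 0 <= H -> 1 <= t -> Q < H ->
  P + (H + t) ^+ 2 <= Q + (H + 1) ^+ 2 -> t <= 2 /\ P <= Q.
Proof.
move=> P_ge0 H_ge0 t_ge1 QH.
have -> : (H + t) ^+ 2 = (H + 1) ^+ 2 + (t - 1) * (2 * H + t + 1) by ring.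
have gap_ge0 : 0 <= (t - 1) * (2 * H + t + 1) by rewrite mulr_ge0 //; lra.
move=> ineq; split; last lra.
rewrite leNgt; apply/negP => t_gt2.
have : 2 * H + t + 1 <= (t - 1) * (2 * H + t + 1) by rewrite ler_peMl //; lra.
lra.
Qed.

Section Euclidean.
Variables (R : realType) (k : nat).
Implicit Types (u v w : 'rV[R]_k * R) (a b : 'rV[R]_k).

Definition dot1 u v : R := \sum_i u.1 ord0 i * v.1 ord0 i + u.2 * v.2.

Lemma dot1C u v : dot1 u v = dot1 v u.
Proof. by rewrite /dot1 mulrC; congr (_ + _); apply: eq_bigr => i _; rewrite mulrC. Qed.

Lemma dot1DZl (c : R) u v w : dot1 (c *: u + v) w = c * dot1 u w + dot1 v w.
Proof.
rewrite /dot1 /=.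
have -> : \sum_i (c *: u.1 + v.1) ord0 i * w.1 ord0 i =
          c * \sum_i u.1 ord0 i * w.1 ord0 i + \sum_i v.1 ord0 i * w.1 ord0 i.
  by rewrite mulr_sumr -big_split; apply: eq_bigr => i _ /=; rewrite !mxE; ring.
change (c *: u.2) with (c * u.2); ring.
Qed.

Lemma dot1Dl u v w : dot1 (u + v) w = dot1 u w + dot1 v w.
Proof. by rewrite -{1}[u]scale1r dot1DZl mul1r. Qed.

Lemma dot1_0l w : dot1 0 w = 0.
Proof. by rewrite /dot1 big1 => [|i _]; rewrite /= ?mxE; ring. Qed.

Lemma dot1Zl (c : R) u w : dot1 (c *: u) w = c * dot1 u w.
Proof. by rewrite -[c *: u]addr0 dot1DZl dot1_0l addr0. Qed.

Lemma dot1Nl u w : dot1 (- u) w = - dot1 u w.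
Proof. by rewrite -scaleN1r dot1Zl mulN1r. Qed.

Lemma dot1Bl u v w : dot1 (u - v) w = dot1 u w - dot1 v w.
Proof. by rewrite dot1Dl dot1Nl. Qed.

Lemma dot1_ge0 u : 0 <= dot1 u u.
Proof. by rewrite addr_ge0 ?sqr_ge0 ?sumr_ge0 // => i _; rewrite -expr2 sqr_ge0. Qed.

Lemma dot1_sqrB u v : dot1 (u - v) (u - v) = dot1 u u - 2 * dot1 u v + dot1 v v.
Proof. by rewrite dot1Bl ![dot1 _ (u - v)]dot1C !dot1Bl (dot1C v u); ring. Qed.

Lemma enorm1E u : enorm1 u = Num.sqrt (dot1 u u).
Proof. by []. Qed.

Lemma enorm1_ge0 u : 0 <= enorm1 u.
Proof. exact: sqrtr_ge0. Qed.

Lemma enorm1_sqr u : enorm1 u ^+ 2 = dot1 u u.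
Proof. by rewrite enorm1E sqr_sqrtr ?dot1_ge0. Qed.

Lemma ler_enorm1 u v : (enorm1 u <= enorm1 v) = (dot1 u u <= dot1 v v).
Proof. by rewrite !enorm1E ler_sqrt ?dot1_ge0. Qed.

Lemma enorm1Z (c : R) u : enorm1 (c *: u) = `|c| * enorm1 u.
Proof.
rewrite !enorm1E dot1Zl dot1C dot1Zl mulrA -expr2 sqrtrM ?sqr_ge0 //.
by rewrite sqrtr_sqr.
Qed.

Lemma enorm1N u : enorm1 (- u) = enorm1 u.
Proof. by rewrite -scaleN1r enorm1Z normrN1 mul1r. Qed.

Lemma CauchySchwarz_dot1 u v : dot1 u v <= enorm1 u * enorm1 v.
Proof.
have cs : dot1 u v ^+ 2 <= dot1 u u * dot1 v v.
  apply: quadratic_ge0_discr => [|t]; first exact: dot1_ge0.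
  have := dot1_ge0 (u - t *: v).
  rewrite dot1_sqrB (dot1C u) !dot1Zl (dot1C v (t *: v)) dot1Zl (dot1C v u).
  lra.
rewrite -sqrtrM ?dot1_ge0 //; apply: le_trans (ler_norm _) _.
by rewrite -sqrtr_sqr ler_sqrt // mulr_ge0 ?dot1_ge0.
Qed.

Lemma ler_enorm1D u v : enorm1 (u + v) <= enorm1 u + enorm1 v.
Proof.
rewrite -(ger0_norm (addr_ge0 (enorm1_ge0 u) (enorm1_ge0 v))) -sqrtr_sqr.
rewrite enorm1E ler_sqrt ?sqr_ge0 // sqrrD !enorm1_sqr.
rewrite dot1Dl ![dot1 _ (u + v)]dot1C !dot1Dl (dot1C v u).
have := CauchySchwarz_dot1 u v; lra.
Qed.

Lemma enorm_ge0 a : 0 <= enorm a.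
Proof. exact: sqrtr_ge0. Qed.

Lemma enormE a : enorm a = enorm1 (a, 0).
Proof. by rewrite /enorm /enorm1 /= expr0n addr0. Qed.

Lemma enorm1_pair_sqr a t : enorm1 (a, t) ^+ 2 = enorm a ^+ 2 + t ^+ 2.
Proof. by rewrite enormE !enorm1_sqr /dot1 /= mulr0 addr0. Qed.

Lemma enorm_le_enorm1 a t : enorm a <= enorm1 (a, t).
Proof. by rewrite enormE ler_enorm1 /dot1 /= mul0r lerD2l -expr2 sqr_ge0. Qed.

Lemma enorm1_pair_le a t : enorm1 (a, t) <= enorm a + `|t|.
Proof.
have -> : (a, t) = (a, 0) + (0, t) by congr (_, _); rewrite /= ?addr0 ?add0r.
apply: le_trans (ler_enorm1D _ _) _; rewrite -enormE lerD2l.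
by rewrite enorm1E /dot1 big1 /= => [|i _]; rewrite ?mxE ?mul0r ?add0r -?expr2 ?sqrtr_sqr.
Qed.

Lemma ler_enormD a b : enorm (a + b) <= enorm a + enorm b.
Proof.
by rewrite !enormE -[X in (a + b, X)](addr0 0); exact: (ler_enorm1D (a, 0) (b, 0)).
Qed.

Lemma enormZ (c : R) a : enorm (c *: a) = `|c| * enorm a.
Proof. by rewrite !enormE -[X in (c *: a, X)](mulr0 c) -enorm1Z. Qed.

Lemma enormN a : enorm (- a) = enorm a.
Proof. by rewrite -scaleN1r enormZ normrN1 mul1r. Qed.

Lemma enorm1_closer_ball c c' u (rho : R) :
  enorm1 (u - c) <= rho -> 2 * rho <= enorm1 (c' - c) ->
  enorm1 (u - c) <= enorm1 (u - c').
Proof.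
move=> u_c cc'; have : enorm1 (c' - c) <= enorm1 (u - c) + enorm1 (u - c').
  have -> : c' - c = - (u - c') + (u - c) by rewrite opprB addrA subrK.
  by rewrite addrC -(enorm1N (u - c')) ler_enorm1D.
lra.
Qed.

Lemma dot1_sqrB_diff p c c' :
  dot1 (p - c) (p - c) - dot1 (p - c') (p - c') =
  2 * dot1 p (c' - c) + (dot1 c c - dot1 c' c').
Proof.
by rewrite !dot1_sqrB (dot1C p (c' - c)) dot1Bl (dot1C c' p) (dot1C c p); ring.
Qed.

Lemma enorm1_closer_convex c c' u w (mu : R) : 0 <= mu <= 1 ->
  enorm1 (u - c) <= enorm1 (u - c') -> enorm1 (w - c) <= enorm1 (w - c') ->
  enorm1 (mu *: u + (1 - mu) *: w - c) <= enorm1 (mu *: u + (1 - mu) *: w - c').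
Proof.
move=> /andP[mu_ge0 mu_le1].
rewrite !ler_enorm1 -!(subr_le0 (dot1 _ _)) !dot1_sqrB_diff dot1DZl dot1Zl.
set du := dot1 u _; set dw := dot1 w _; set K := _ - _ => hu hw.
have : mu * (2 * du + K) <= 0 by rewrite mulr_ge0_le0.
have : (1 - mu) * (2 * dw + K) <= 0 by rewrite mulr_ge0_le0 // subr_ge0.
lra.
Qed.

End Euclidean.

Section Lattice.
Variables (R : realType) (k : nat).

Lemma zvecRD (m n : 'rV[int]_k) : zvecR (m + n) = zvecR m + zvecR n :> 'rV[R]_k.
Proof. by apply/matrixP => i j; rewrite !mxE intrD. Qed.

Lemma zvecRB (m n : 'rV[int]_k) : zvecR (m - n) = zvecR m - zvecR n :> 'rV[R]_k.
Proof. by apply/matrixP => i j; rewrite !mxE intrB. Qed.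

Definition floor_row (a : 'rV[R]_k) : 'rV[int]_k := \row_i Num.floor (a ord0 i).

Lemma enorm_sub_floor_row (a : 'rV[R]_k) :
  enorm (a - zvecR (floor_row a)) <= Num.sqrt k%:R.
Proof.
rewrite ler_sqrt // -[k in k%:R]card_ord -sumr_const; apply: ler_sum => i _.
rewrite !mxE; have /andP[fl_le lt_fl1] := floor_itv (a ord0 i).
rewrite intrD in lt_fl1.
have : 0 <= a ord0 i - (Num.floor (a ord0 i))%:~R < 1 by apply/andP; split; lra.
by case/andP => d_ge0 d_lt1; rewrite expr_le1 // ltW.
Qed.

End Lattice.

Section Voronoi.
Variables (R : realType) (k : nat) (X : Type).
Variables (T : 'rV[int]_k -> X -> X) (phi : X -> R) (x : X).
Local Notation c := (vcenter T phi x).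
Local Notation V := (Vcell T phi x).

Definition separated_markers (M : nat) : Prop :=
  forall y, 0 < phi y -> forall j : 'rV[int]_k, j != 0 ->
    enorm (zvecR j : 'rV[R]_k) < M%:R -> phi (T j y) = 0.

Definition covering_markers (L : nat) : Prop :=
  forall y, exists j : 'rV[int]_k, enorm (zvecR j : 'rV[R]_k) < L%:R /\ phi (T j y) = 1.

Lemma Vcell_convex n u w (mu : R) : 0 <= mu <= 1 ->
  V n u -> V n w -> V n (mu *: u + (1 - mu) *: w).
Proof.
move=> mu01 [phin Vu] [_ Vw]; split => // m phim.
exact: enorm1_closer_convex (Vu m phim) (Vw m phim).
Qed.

Lemma cball1_sub_Vcell n (rho : R) : phi (T n x) != 0 ->
  (forall m, phi (T m x) != 0 -> m != n -> 2 * rho <= enorm (zvecR m - zvecR n)) ->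
  cball1 (c n) rho `<=` V n.
Proof.
move=> phin sep u u_n; split => // m phim.
have [-> //|mn] := eqVneq m n.
apply: enorm1_closer_ball u_n _.
apply: le_trans (sep m phim mn) _.
exact: enorm_le_enorm1.
Qed.

Hypothesis T_add : forall m n y, T (m + n) y = T m (T n y).

Lemma marker_separated (M : nat) n m :
  separated_markers M ->
  0 < phi (T n x) -> phi (T m x) != 0 -> m != n ->
  M%:R <= enorm (zvecR m - zvecR n : 'rV[R]_k).
Proof.
move=> sep phin phim mn; rewrite leNgt -zvecRB; apply/negP => near.
have := sep _ phin (m - n); rewrite subr_eq0 mn -T_add subrK => /(_ isT near).
exact/eqP.
Qed.

Lemma exists_marker_near (L : nat) :
  covering_markers L ->
  forall a : 'rV[R]_k, exists m,
    phi (T m x) = 1 /\ enorm (a - zvecR m) < L%:R + Num.sqrt k%:R.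
Proof.
move=> cover a; have [j [j_lt phij]] := cover (T (floor_row a) x).
exists (j + floor_row a); split; first by rewrite T_add.
rewrite zvecRD opprD addrCA addrC.
apply: le_lt_trans (ler_enormD _ _) _.
by rewrite enormN [_ + enorm _]addrC ltr_leD ?enorm_sub_floor_row.
Qed.

Hypothesis phi01 : forall y, 0 <= phi y <= 1.

Lemma Vcell_level_bound (L : nat) (H : R) n a :
  covering_markers L ->
  (L%:R + Num.sqrt k%:R) ^+ 2 <= H -> V n (a, - H) ->
  1 <= (phi (T n x))^-1 <= 2 /\ enorm (a - zvecR n) < L%:R + Num.sqrt k%:R.
Proof.
move=> cover LH [phin Van]; set t := (phi (T n x))^-1.
have t_ge1 : 1 <= t.
  by have /andP[phi_ge0 phi_le1] := phi01 (T n x); rewrite invf_ge1 // lt_def phin.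
have H_ge0 : 0 <= H := le_trans (sqr_ge0 _) LH.
have [m [phim am]] := exists_marker_near cover a.
have am2 : enorm (a - zvecR m) ^+ 2 < H.
  by apply: lt_le_trans LH; rewrite ltr_sqr ?nnegrE ?enorm_ge0 ?addr_ge0.
have := Van m; rewrite phim oner_neq0 /esub1 /= => /(_ isT).
rewrite ler_enorm1 -!enorm1_sqr !enorm1_pair_sqr phim invr1 -/t -!opprD !sqrrN.
case/sqr_height_bound => //; first exact: sqr_ge0.
move=> t_le2 an_am; rewrite t_ge1 t_le2; split => //.
by apply: le_lt_trans am; rewrite -ler_sqr ?nnegrE ?enorm_ge0.
Qed.

Lemma Vcell_contract (M L : nat) (H s r : R) n a :
  separated_markers M ->
  covering_markers L ->
  1 < s -> 2 * (r + 2) <= M%:R * (1 - s^-1) ->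
  (L%:R + Num.sqrt k%:R) ^+ 2 <= H -> V n (a, - (s * H)) ->
  cball (s^-1 *: a + (1 - s^-1) *: zvecR n) r `<=` Wcell T phi H x n.
Proof.
move=> sep cover s_gt1 M_large LH Van b b_near.
have s_gt0 : 0 < s := lt_trans ltr01 s_gt1.
set lam := 1 - s^-1 in M_large b_near *.
have lam_gt0 : 0 < lam by rewrite subr_gt0 invf_lt1.
have H_ge0 : 0 <= H := le_trans (sqr_ge0 _) LH.
have LsH : (L%:R + Num.sqrt k%:R) ^+ 2 <= s * H.
  by rewrite (le_trans LH) // ler_peMl // ltW.
have [/andP[_ t_le2] _] := Vcell_level_bound cover LsH Van.
have phin_gt0 : 0 < phi (T n x).
  by have /andP[phi_ge0 _] := phi01 (T n x); rewrite lt_def Van.1.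
set w := lam^-1 *: (b - (s^-1 *: a + lam *: zvecR n)).
have Vz : V n (zvecR n + w, 0).
  apply: (@cball1_sub_Vcell n (M%:R / 2)) => [|m phim mn|]; first exact: Van.1.
    by have := marker_separated sep phin_gt0 phim mn; lra.
  rewrite /cball1 /esub1 /= addrC addKr sub0r.
  apply: le_trans (enorm1_pair_le _ _) _.
  have t_ge0 : 0 <= (phi (T n x))^-1 by rewrite invr_ge0 ltW.
  have lam_inv_ge0 : 0 <= lam^-1 by rewrite invr_ge0 ltW.
  rewrite enormZ normrN (ger0_norm lam_inv_ge0) (ger0_norm t_ge0).
  rewrite -(ler_pM2l lam_gt0) mulrDr mulrA mulfV ?gt_eqF // mul1r.
  have : lam * (phi (T n x))^-1 <= (phi (T n x))^-1.
    by rewrite ler_piMl // lerBlDr lerDl invr_ge0 ltW.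
  move: b_near; rewrite /cball /=; lra.
change (V n (b, - H)).
have -> : (b, - H) = s^-1 *: (a, - (s * H)) + lam *: (zvecR n + w, 0).
  apply: injective_projections => /=.
    by apply/rowP => i; rewrite /w !mxE mulrDr mulrA mulfV ?gt_eqF // mul1r; ring.
  by change (- H = s^-1 * - (s * H) + lam * 0); field; rewrite gt_eqF.
apply: Vcell_convex Van Vz.
by rewrite invr_ge0 ltW // invf_le1 // ltW.
Qed.

End Voronoi.

Theorem lemma4p1 (R : realType) (k : nat) :
  (* parts (1)-(3) *)
  (forall (X : metricType R) (T : 'rV[int]_k -> X -> X),
     compact [set: X] -> is_Zk_action T -> marker_property T ->
   forall (M L : nat) (phi : X -> R) (H : R), admissible T M L phi H ->
   forall (x : X) (n : 'rV[int]_k) (a : 'rV[R]_k),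
     (0 < phi (T n x) ->
        cball1 (vcenter T phi x n) (M%:R / 2) `<=` Vcell T phi x n) /\
     (Wcell T phi H x n !=set0 ->
        1 <= (phi (T n x))^-1 <= 2) /\
     (Vcell T phi x n (a, - H) ->
        enorm (a - zvecR n) < L%:R + Num.sqrt (k%:R : R))) /\
  (* part (4) *)
  (forall s r : R, 1 < s -> 0 < r ->
   exists M0 : nat,
   forall (X : metricType R) (T : 'rV[int]_k -> X -> X),
     compact [set: X] -> is_Zk_action T -> marker_property T ->
   forall (M L : nat) (phi : X -> R) (H : R), (M0 <= M)%N ->
     admissible T M L phi H ->
   forall (x : X) (n : 'rV[int]_k) (a : 'rV[R]_k),
     Vcell T phi x n (a, - (s * H)) ->
     cball (s^-1 *: a + (1 - s^-1) *: zvecR n) r `<=` Wcell T phi H x n).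
Proof.
split.
  move=> X T _ [_ [T_add _]] _ M L phi H [_ [_ [_ [phi01 [sep [cover LH]]]]]] x n a.
  have level := Vcell_level_bound T_add phi01 cover LH (n := n).
  split; [|split]; last by case/level.
    move=> phin; apply: cball1_sub_Vcell; first by rewrite gt_eqF.
    by move=> m phim mn; have := marker_separated T_add sep phin phim mn; lra.
  by case=> b /level[].
move=> s r s_gt1 _.
have lam_gt0 : 0 < 1 - s^-1 by rewrite subr_gt0 invf_lt1 // (lt_trans ltr01).
exists (Num.trunc (2 * (r + 2) / (1 - s^-1))).+1.
move=> X T _ [_ [T_add _]] _ M L phi H M0M [_ [_ [_ [phi01 [sep [cover LH]]]]]] x n a.
move=> Van; apply: (Vcell_contract T_add phi01 sep cover s_gt1 _ LH Van).
rewrite -ler_pdivrMr //; apply/ltW/(lt_le_trans (truncnS_gt _)).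
by rewrite ler_nat.
Qed.
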